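(* Consider a mean-variance team stochastic game as described in the context, and suppose the long-run average reward $\eta^{\boldsymbol{\mu}}$ takes the same value for all joint policies $\boldsymbol{\mu}\in\mathcal{U}$. Then Algorithm MV-MAPI (described in the context) converges to a Nash equilibrium $\tilde{\boldsymbol{\mu}}$, i.e. $J(\tilde{\boldsymbol{\mu}})\ge J(\mu_i,\tilde{\boldsymbol{\mu}}_{-i})$ for all $i\in\mathcal{N}$ and $\mu_i\in\mathcal{U}_i$.
   Context: Game: finite agents $\mathcal{N}=\{1,\dots,N\}$, finite state space $\mathcal{S}$, finite action sets $\mathcal{A}_i$, $\mathcal{A}=\prod_i\mathcal{A}_i$, transition kernel $P(s'|s,\boldsymbol{a})$, common reward $r:\mathcal{S}\times\mathcal{A}\to\mathbb{R}$. Policies $\mu_i:\mathcal{S}\to\Delta(\mathcal{A}_i)$ (set $\mathcal{U}_i$); joint policies $\boldsymbol{\mu}\in\mathcal{U}=\prod_i\mathcal{U}_i$ with $\boldsymbol{\mu}(\boldsymbol{a}|s)=\prod_i\mu_i(a_i|s)$; $(\mu_i,\boldsymbol{\mu}_{-i})$ means agent $i$ uses $\mu_i$, others use $\boldsymbol{\mu}_{-i}$. Standing assumption: the chain $P^{\boldsymbol{\mu}}(s'|s)=\sum_{\boldsymbol{a}}\boldsymbol{\mu}(\boldsymbol{a}|s)P(s'|s,\boldsymbol{a})$ is ergodic for every $\boldsymbol{\mu}\in\mathcal{U}$, stationary distribution $\pi^{\boldsymbol{\mu}}$. $\eta^{\boldsymbol{\mu}}=\sum_s\pi^{\boldsymbol{\mu}}(s)\sum_{\boldsymbol{a}}\boldsymbol{\mu}(\boldsymbol{a}|s)r(s,\boldsymbol{a})$;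 $\zeta^{\boldsymbol{\mu}}=\sum_s\pi^{\boldsymbol{\mu}}(s)\sum_{\boldsymbol{a}}\boldsymbol{\mu}(\boldsymbol{a}|s)(r(s,\boldsymbol{a})-\eta^{\boldsymbol{\mu}})^2$; for fixed $\beta\ge0$, $J(\boldsymbol{\mu})=\eta^{\boldsymbol{\mu}}-\beta\zeta^{\boldsymbol{\mu}}$. $f^{\boldsymbol{\mu}}(s,\boldsymbol{a})=r(s,\boldsymbol{a})-\beta(r(s,\boldsymbol{a})-\eta^{\boldsymbol{\mu}})^2$, $f^{\boldsymbol{\mu}}(s)=\sum_{\boldsymbol{a}}\boldsymbol{\mu}(\boldsymbol{a}|s)f^{\boldsymbol{\mu}}(s,\boldsymbol{a})$; $V_f^{\boldsymbol{\mu}}$ solves $V(s)=f^{\boldsymbol{\mu}}(s)-J(\boldsymbol{\mu})+\sum_{s'}P^{\boldsymbol{\mu}}(s'|s)V(s')$ (unique up to an additive constant); $Q_f^{\boldsymbol{\mu}}(s,\boldsymbol{a})=f^{\boldsymbol{\mu}}(s,\boldsymbol{a})-J(\boldsymbol{\mu})+\sum_{s'}P(s'|s,\boldsymbol{a})V_f^{\boldsymbol{\mu}}(s')$, $A_f^{\boldsymbol{\mu}}=Q_f^{\boldsymbol{\mu}}-V_f^{\boldsymbol{\mu}}$. Algorithm MV-MAPI: start with a deterministic joint policy $\boldsymbol{\mu}^{(0)}$. For $k=0,1,\dots$: set $\hat{\boldsymbol{\mu}}^{(k,0)}=\boldsymbol{\mu}^{(k)}$ and draw a random permutation $i_1,\dots,i_N$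 of the agents. For $h=1,\dots,N$: for every $s$, set $\mu^{(k+1)}_{i_h}(s)$ to be an action $a_{i_h}$ maximizing $\mathbb{E}_{\boldsymbol{a}_{-i_h}\sim\hat{\boldsymbol{\mu}}^{(k,h-1)}_{-i_h}(\cdot|s)}[A_f^{\hat{\boldsymbol{\mu}}^{(k,h-1)}}(s,a_{i_h},\boldsymbol{a}_{-i_h})]$, keeping $\mu^{(k+1)}_{i_h}(s)=\mu^{(k)}_{i_h}(s)$ whenever the latter attains the maximum; set $\hat{\boldsymbol{\mu}}^{(k,h)}=(\mu^{(k+1)}_{i_1},\dots,\mu^{(k+1)}_{i_h},\mu^{(k)}_{i_{h+1}},\dots,\mu^{(k)}_{i_N})$. If $\mu^{(k+1)}_i=\mu^{(k)}_i$ for all $i$, stop and return $\boldsymbol{\mu}^{(k)}$; otherwise set $\boldsymbol{\mu}^{(k+1)}=\hat{\boldsymbol{\mu}}^{(k,N)}$. *)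

From HB Require Import structures.
From mathcomp Require Import all_boot all_order all_algebra all_fingroup.
From mathcomp Require Import boolp classical_sets reals.
Set Implicit Arguments. Unset Strict Implicit. Unset Printing Implicit Defensive.
Import Order.TTheory GRing.Theory Num.Theory.
Local Open Scope ring_scope.

Definition jact (N : nat) (A : 'I_N -> finType) := {dffun forall i : 'I_N, A i}.

(* Stochastic individual policy  mu_i : S -> Delta(A_i), stored as a function
   mu_i s a = mu_i(a|s).  Joint (product) policy: one such map per agent.      *)
Definition ipol (R : realType) (S : finType) (Ai : finType) := S -> Ai -> R.
Definition jpol (R : realType) (N : nat) (S : finType) (A : 'I_N -> finType) :=
  forall i : 'I_N, ipol R S (A i).

Definition ipol_valid (R : realType) (S Ai : finType) (m : ipol R S Ai) : Prop :=
  (forall s a, 0 <= m s a) /\ (forall s, \sum_(a : Ai) m s a = 1).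
Definition jpol_valid (R : realType) N (S : finType) (A : 'I_N -> finType)
  (mu : jpol R S A) : Prop := forall i, ipol_valid (mu i).

Definition jprob (R : realType) N (S : finType) (A : 'I_N -> finType)
  (mu : jpol R S A) (s : S) (a : jact A) : R := \prod_(i < N) mu i s (a i).

Definition deviate (R : realType) N (S : finType) (A : 'I_N -> finType)
  (mu : jpol R S A) (i : 'I_N) (mi : ipol R S (A i)) : jpol R S A :=
  @dfwith _ (fun j : 'I_N => ipol R S (A j)) mu i mi.

Definition dpol N (S : finType) (A : 'I_N -> finType) := forall i : 'I_N, S -> A i.
Definition dpol_to_jpol (R : realType) N (S : finType) (A : 'I_N -> finType)
  (d : dpol S A) : jpol R S A := fun i s a => if a == d i s then 1 else 0.

Definition kernel (R : realType) N (S : finType) (A : 'I_N -> finType) :=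
  S -> jact A -> S -> R.
Definition kernel_valid (R : realType) N (S : finType) (A : 'I_N -> finType)
  (P : kernel R S A) : Prop :=
  (forall s a s', 0 <= P s a s') /\ (forall s a, \sum_(s' : S) P s a s' = 1).

Definition Pmu (R : realType) N (S : finType) (A : 'I_N -> finType)
  (P : kernel R S A) (mu : jpol R S A) (s s' : S) : R :=
  \sum_(a : jact A) jprob mu s a * P s a s'.

Fixpoint nstep (R : realType) (S : finType) (M : S -> S -> R) (n : nat) (s s' : S) : R :=
  match n with
  | 0 => if s == s' then 1 else 0
  | n.+1 => \sum_(t : S) nstep M n s t * M t s'
  end.

(* Ergodic (finite-state): irreducible and aperiodic, i.e. some power of the
   transition matrix has all entries positive (regular chain).              *)
Definition ergodic (R : realType) (S : finType) (M : S -> S -> R) : Prop :=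
  exists n, forall s s', 0 < nstep M n s s'.

Definition stationary (R : realType) (S : finType) (M : S -> S -> R)
  (p : {ffun S -> R}) : Prop :=
  (forall s, 0 <= p s) /\ \sum_(s : S) p s = 1 /\
  (forall s', \sum_(s : S) p s * M s s' = p s').

(* pi^mu : the (unique, under ergodicity) stationary distribution *)
Definition statdist (R : realType) N (S : finType) (A : 'I_N -> finType)
  (P : kernel R S A) (mu : jpol R S A) : {ffun S -> R} :=
  xget [ffun=> 0] [set p | stationary (Pmu P mu) p].

Definition etamu (R : realType) N (S : finType) (A : 'I_N -> finType)
  (P : kernel R S A) (r : S -> jact A -> R) (mu : jpol R S A) : R :=
  \sum_(s : S) statdist P mu s * \sum_(a : jact A) jprob mu s a * r s a.

Definition zeta (R : realType) N (S : finType) (A : 'I_N -> finType)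
  (P : kernel R S A) (r : S -> jact A -> R) (mu : jpol R S A) : R :=
  \sum_(s : S) statdist P mu s *
    \sum_(a : jact A) jprob mu s a * (r s a - etamu P r mu) ^+ 2.

Definition Jmv (R : realType) N (S : finType) (A : 'I_N -> finType)
  (P : kernel R S A) (r : S -> jact A -> R) (beta : R) (mu : jpol R S A) : R :=
  etamu P r mu - beta * zeta P r mu.

Definition fsa (R : realType) N (S : finType) (A : 'I_N -> finType)
  (P : kernel R S A) (r : S -> jact A -> R) (beta : R) (mu : jpol R S A)
  (s : S) (a : jact A) : R :=
  r s a - beta * (r s a - etamu P r mu) ^+ 2.

Definition fs (R : realType) N (S : finType) (A : 'I_N -> finType)
  (P : kernel R S A) (r : S -> jact A -> R) (beta : R) (mu : jpol R S A)
  (s : S) : R :=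
  \sum_(a : jact A) jprob mu s a * fsa P r beta mu s a.

(* V_f^mu : some solution of the Poisson equation (unique up to a constant) *)
Definition poisson_sol (R : realType) N (S : finType) (A : 'I_N -> finType)
  (P : kernel R S A) (r : S -> jact A -> R) (beta : R) (mu : jpol R S A)
  (V : {ffun S -> R}) : Prop :=
  forall s, V s = fs P r beta mu s - Jmv P r beta mu + \sum_(s' : S) Pmu P mu s s' * V s'.

Definition Vf (R : realType) N (S : finType) (A : 'I_N -> finType)
  (P : kernel R S A) (r : S -> jact A -> R) (beta : R) (mu : jpol R S A) : {ffun S -> R} :=
  xget [ffun=> 0] [set V | poisson_sol P r beta mu V].

Definition Qf (R : realType) N (S : finType) (A : 'I_N -> finType)
  (P : kernel R S A) (r : S -> jact A -> R) (beta : R) (mu : jpol R S A)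
  (s : S) (a : jact A) : R :=
  fsa P r beta mu s a - Jmv P r beta mu + \sum_(s' : S) P s a s' * Vf P r beta mu s'.

Definition Af (R : realType) N (S : finType) (A : 'I_N -> finType)
  (P : kernel R S A) (r : S -> jact A -> R) (beta : R) (mu : jpol R S A)
  (s : S) (a : jact A) : R :=
  Qf P r beta mu s a - Vf P r beta mu s.

Definition expAdv (R : realType) N (S : finType) (A : 'I_N -> finType)
  (P : kernel R S A) (r : S -> jact A -> R) (beta : R) (mu : jpol R S A)
  (i : 'I_N) (s : S) (ai : A i) : R :=
  \sum_(a : jact A | a i == ai)
     (\prod_(j < N | j != i) mu j s (a j)) * Af P r beta mu s a.

(* Intermediate policy hat-mu^{(k,h)}: agents sigma 0, ..., sigma (h-1) use the
   new policy d', the others the old policy d.                               *)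
Definition hatpol N (S : finType) (A : 'I_N -> finType)
  (sigma : {perm 'I_N}) (d d' : dpol S A) (h : nat) : dpol S A :=
  fun j => if (nat_of_ord ((sigma^-1)%g j) < h)%N then d' j else d j.

(* One outer iteration of MV-MAPI with permutation sigma (i_{h+1} = sigma h,
   h = 0..N-1), from mu^(k) = d to mu^(k+1) = d' (or the unchanged policy d' = d,
   which is the stopping case).                                              *)
Definition mapi_step (R : realType) N (S : finType) (A : 'I_N -> finType)
  (P : kernel R S A) (r : S -> jact A -> R) (beta : R)
  (sigma : {perm 'I_N}) (d d' : dpol S A) : Prop :=
  forall (h : 'I_N) (s : S),
    let i := sigma h in
    let muh : jpol R S A := dpol_to_jpol R (hatpol sigma d d' h) in
    (forall ai : A i, expAdv P r beta muh s ai <= expAdv P r beta muh s (d' i s)) /\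
    ((forall ai : A i, expAdv P r beta muh s ai <= expAdv P r beta muh s (d i s)) ->
       d' i s = d i s).

Definition nash (R : realType) N (S : finType) (A : 'I_N -> finType)
  (P : kernel R S A) (r : S -> jact A -> R) (beta : R) (mu : jpol R S A) : Prop :=
  forall (i : 'I_N) (mi : ipol R S (A i)), ipol_valid mi ->
    Jmv P r beta (deviate mu mi) <= Jmv P r beta mu.

(* Since [eta^mu] is the same for every policy, so is [f^mu], and the Poisson
   equation yields the performance-difference identity
     J(mu') - J(mu) = \sum_s pi^mu'(s) \sum_a mu'(a|s) A_f^mu(s, a).
   When a single agent switches, this is a [pi]-weighted sum of its expected
   advantages.  The expected advantage of the current action is 0, so each
   greedy update of MV-MAPI does not decrease J, and increases it strictly
   ([pi > 0] by ergodicity) when some action changes.  There are finitely many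
   deterministic policies, so the iteration reaches a fixed point, where every
   agent is greedy; by the same identity no unilateral stochastic deviation
   can then increase J. *)

From HB Require Import structures.
From mathcomp Require Import all_boot all_order all_algebra all_fingroup.
From mathcomp Require Import boolp classical_sets reals.
Import Order.TTheory GRing.Theory Num.Theory.
Local Open Scope ring_scope.

Set Implicit Arguments.
Unset Strict Implicit.
Unset Printing Implicit Defensive.

Lemma sum_dffun_prod (R : comPzSemiRingType) (I : finType) (T : I -> finType)
    (F : forall i, T i -> R) :
  \sum_(f : {dffun forall i, T i}) \prod_i F i (f i) = \prod_i \sum_(x : T i) F i x.
Proof.
pose F' i := [ffun x : T i => F i x].
transitivity (\prod_i \sum_(x : T i) F' i x); last first.
  by apply: eq_bigr => i _; apply: eq_bigr => x _; rewrite ffunE.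
under eq_bigr do rewrite (big_tag (fun i => F' i)).
rewrite bigA_distr_big_dep -big_fprod.
rewrite (reindex (@fprod_of_dffun _ T)); last exact/onW_bij/fprod_of_dffun_bij.
by apply: eq_bigr => f _; apply: eq_bigr => i _; rewrite fprodE ffunE.
Qed.

Lemma psumr_gt0 (R : numDomainType) (I : finType) (F : I -> R) j :
  (forall i, 0 <= F i) -> 0 < F j -> 0 < \sum_i F i.
Proof.
by move=> F_ge0 Fj_gt0; rewrite (bigD1 j) //= ltr_pwDl // sumr_ge0.
Qed.

Lemma incr_inj disp (T : porderType disp) (f : nat -> T) :
  (forall k, (f k < f k.+1)%O) -> injective f.
Proof.
move=> f_incr k1 k2 f_eq; have f_homo := homo_ltn lt_trans f_incr.
by case: (ltngtP k1 k2) => // /f_homo; rewrite f_eq ltxx.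
Qed.

Lemma nat_fun_not_inj (T : finType) (x : nat -> T) : ~ injective x.
Proof.
move=> x_inj; have x_ord_inj : injective (fun k : 'I_#|T|.+1 => x k).
  by move=> k1 k2 /x_inj/val_inj.
by have := leq_card _ x_ord_inj; rewrite card_ord ltnn.
Qed.

Section FiniteMarkovChain.
Variables (R : realType) (S : finType) (M : S -> S -> R).

Definition left_fixed (w : S -> R) := forall s', \sum_s w s * M s s' = w s'.

Lemma left_fixed_nstep w n : left_fixed w ->
  forall s', \sum_s w s * nstep M n s s' = w s'.
Proof.
move=> w_inv; elim: n => [|n IHn] s' /=.
  rewrite (bigD1 s') //= eqxx mulr1 big1 ?addr0 // => s /negbTE ->.
  by rewrite mulr0.
under eq_bigr do rewrite big_distrr /=.
rewrite exchange_big /= -w_inv; apply: eq_bigr => t _.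
by rewrite -IHn big_distrl; apply: eq_bigr => s _; rewrite mulrA.
Qed.

Lemma left_fixed_ge0_eq0 w s0 : ergodic M -> left_fixed w ->
  (forall s, 0 <= w s) -> w s0 = 0 -> forall s, w s = 0.
Proof.
move=> [n nstep_gt0] w_inv w_ge0 ws0 s.
have w_nstep0 : \sum_t w t * nstep M n t s0 = 0 by rewrite left_fixed_nstep.
have term_ge0 t : true -> 0 <= w t * nstep M n t s0.
  by move=> _; rewrite mulr_ge0 // ltW.
have /eqP := psumr_eq0P term_ge0 w_nstep0 (i := s) isT.
by rewrite mulf_eq0 (gt_eqF (nstep_gt0 s s0)) orbF => /eqP.
Qed.

Lemma stationary_gt0 p : ergodic M -> stationary M p -> forall s, 0 < p s.
Proof.
move=> M_erg [p_ge0 [p_sum1 p_inv]] s; rewrite lt_def p_ge0 andbT.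
apply/eqP => ps0; have p0 := left_fixed_ge0_eq0 M_erg p_inv p_ge0 ps0.
by move: p_sum1; rewrite big1 // => /eqP; rewrite eq_sym oner_eq0.
Qed.

(* Subtracting from [w] the largest multiple [c p] lying below it leaves a
   nonnegative fixed vector with a zero, which must vanish identically. *)
Lemma left_fixed_proportional p w : ergodic M -> stationary M p -> left_fixed w ->
  exists c, forall s, w s = c * p s.
Proof.
move=> M_erg p_stat w_inv; have p_gt0 := stationary_gt0 M_erg p_stat.
case: p_stat => _ [_ p_inv].
case: (pickP S) => [t0 _|S0]; last by exists 0 => s; have := S0 s.
have [s0 _ ratio_min] := @arg_minP _ R S t0 xpredT (fun s => w s / p s) isT.
pose c := w s0 / p s0; exists c.
pose u s := w s - c * p s.
have u_inv : left_fixed u.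
  move=> s'; rewrite /u; under eq_bigr do rewrite mulrBl.
  rewrite sumrB w_inv -(p_inv s') big_distrr /=; congr (_ - _).
  by apply: eq_bigr => t _; rewrite mulrA.
have u_ge0 s : 0 <= u s by rewrite subr_ge0 -ler_pdivlMr // ratio_min.
have us0 : u s0 = 0 by rewrite /u /c divfK ?subrr // gt_eqF.
move=> s; apply/eqP; rewrite -subr_eq0.
by have /eqP := left_fixed_ge0_eq0 M_erg u_inv u_ge0 us0 s.
Qed.

Definition laplacian_mx : 'M[R]_#|S| :=
  \matrix_(i, j) ((i == j)%:R - M (enum_val i) (enum_val j)).

Lemma sum_enum_rank (F : 'I_#|S| -> R) : \sum_k F k = \sum_s F (enum_rank s).
Proof. by rewrite (reindex enum_rank) //; exact/onW_bij/enum_rank_bij. Qed.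

Lemma mulmx_laplacian (u : 'rV[R]_#|S|) s' :
  (u *m laplacian_mx) 0 (enum_rank s') =
  u 0 (enum_rank s') - \sum_s u 0 (enum_rank s) * M s s'.
Proof.
rewrite !mxE; under eq_bigr do rewrite !mxE mulrBr.
rewrite sumrB (bigD1 (enum_rank s')) //= eqxx mulr1 big1 ?addr0; last first.
  by move=> k /negbTE ->; rewrite mulr0.
rewrite sum_enum_rank; congr (_ - _).
by apply: eq_bigr => s _; rewrite !enum_rankK.
Qed.

Lemma mulmx_tr_laplacian (u : 'rV[R]_#|S|) s :
  (u *m laplacian_mx^T) 0 (enum_rank s) =
  u 0 (enum_rank s) - \sum_s' M s s' * u 0 (enum_rank s').
Proof.
rewrite !mxE; under eq_bigr do rewrite !mxE mulrBr.
rewrite sumrB (bigD1 (enum_rank s)) //= eqxx mulr1 big1 ?addr0; last first.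
  by move=> k /negbTE; rewrite eq_sym => ->; rewrite mulr0.
rewrite sum_enum_rank; congr (_ - _).
by apply: eq_bigr => s' _; rewrite !enum_rankK mulrC.
Qed.

Lemma left_fixed_kernel (u : 'rV[R]_#|S|) :
  u *m laplacian_mx = 0 -> left_fixed (fun s => u 0 (enum_rank s)).
Proof.
move=> /rowP/(_ (enum_rank _)) uB s'; apply/eqP; rewrite eq_sym -subr_eq0.
by rewrite -mulmx_laplacian uB mxE.
Qed.

(* Fredholm alternative: [b] is in the range of [I - M] as soon as it is
   orthogonal to the left kernel of [I - M], which is spanned by [p]. *)
Lemma poisson_exists p (b : S -> R) :
  ergodic M -> stationary M p -> \sum_s p s * b s = 0 ->
  exists V : {ffun S -> R}, forall s, V s = b s + \sum_s' M s s' * V s'.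
Proof.
move=> M_erg p_stat pb0.
pose bv : 'rV[R]_#|S| := \row_k b (enum_val k).
have /submxP[D bD] : (bv <= laplacian_mx^T)%MS.
  rewrite submxE; move: (cokermx _) (mulmx_coker laplacian_mx^T) => C BC.
  apply/eqP/rowP => j; rewrite !mxE.
  have /left_fixed_kernel w_inv : row j C^T *m laplacian_mx = 0.
    by rewrite -row_mul -[laplacian_mx]trmxK -trmx_mul BC trmx0 row0.
  have [c w_prop] := left_fixed_proportional M_erg p_stat w_inv.
  rewrite sum_enum_rank (eq_bigr (fun s => c * (p s * b s))); last first.
    by move=> s _; move: (w_prop s); rewrite !mxE enum_rankK => ->; rewrite mulrCA [b s * _]mulrC.
  by rewrite -mulr_sumr pb0 mulr0.
exists [ffun s => D 0 (enum_rank s)] => s; rewrite ffunE.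
move: (congr1 (fun u : 'rV_#|S| => u 0 (enum_rank s)) bD).
rewrite mulmx_tr_laplacian mxE enum_rankK => ->.
by under [X in _ + X]eq_bigr do rewrite ffunE; rewrite subrK.
Qed.

Hypothesis M_ge0 : forall s s', 0 <= M s s'.
Hypothesis M_sum1 : forall s, \sum_s' M s s' = 1.

Lemma exists_left_fixed_neq0 (t0 : S) : exists2 w, left_fixed w & exists s, w s != 0.
Proof.
have /det0P[u u_neq0 uB] : \det laplacian_mx == 0.
  rewrite -det_tr; apply/det0P; exists (const_mx 1).
    by apply/eqP => /rowP/(_ (enum_rank t0)); rewrite !mxE => /eqP; rewrite oner_eq0.
  apply/rowP => k; rewrite -[k]enum_valK mulmx_tr_laplacian !mxE.
  by under eq_bigr do rewrite mxE mulr1; rewrite M_sum1 subrr.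
exists (fun s => u 0 (enum_rank s)); first exact: left_fixed_kernel.
by have /rV0Pn[k uk] := u_neq0; exists (enum_val k); rewrite enum_valK.
Qed.

(* [|w s'| <= \sum_s |w s| M s s'] by the triangle inequality, and both sides
   have the same total mass because [M] is stochastic. *)
Lemma left_fixed_norm w : left_fixed w -> left_fixed (fun s => `|w s|).
Proof.
move=> w_inv s'.
have norm_sub t' : `|w t'| <= \sum_s `|w s| * M s t'.
  rewrite -w_inv (le_trans (ler_norm_sum _ _ _)) // ler_sum // => s _.
  by rewrite normrM (ger0_norm (M_ge0 _ _)).
have gap_sum0 : \sum_t' (\sum_s `|w s| * M s t' - `|w t'|) = 0.
  rewrite sumrB exchange_big /=.
  by under eq_bigr do rewrite -big_distrr /= M_sum1 mulr1; rewrite subrr.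
have gap_ge0 t' : true -> 0 <= \sum_s `|w s| * M s t' - `|w t'|.
  by rewrite subr_ge0 norm_sub.
by apply/eqP; rewrite -subr_eq0; have /eqP := psumr_eq0P gap_ge0 gap_sum0 (i := s') isT.
Qed.

Lemma stationary_exists (t0 : S) : exists p, stationary M p.
Proof.
have [w w_inv [s ws_neq0]] := exists_left_fixed_neq0 t0.
have mass_gt0 : 0 < \sum_t `|w t| by apply: (psumr_gt0 (j := s)); rewrite ?normr_gt0.
exists [ffun t => `|w t| / \sum_t' `|w t'|]; split; [|split].
- by move=> t; rewrite ffunE divr_ge0 // ltW.
- by under eq_bigr do rewrite ffunE; rewrite -big_distrl /= divff // gt_eqF.
- move=> t'; rewrite ffunE -(left_fixed_norm w_inv) big_distrl /=.
  by apply: eq_bigr => t _; rewrite ffunE mulrAC.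
Qed.

End FiniteMarkovChain.

Section Policies.
Variables (R : realType) (N : nat) (S : finType) (A : 'I_N -> finType).
Implicit Types (mu : jpol R S A) (d : dpol S A).
Local Notation djp d := (dpol_to_jpol R d : jpol R S A).

Lemma jprob_ge0 mu s a : jpol_valid mu -> 0 <= jprob mu s a.
Proof. by move=> mu_valid; apply: prodr_ge0 => i _; case: (mu_valid i). Qed.

Lemma jprob_sum1 mu s : jpol_valid mu -> \sum_(a : jact A) jprob mu s a = 1.
Proof.
move=> mu_valid; rewrite /jprob (sum_dffun_prod (fun i x => mu i s x)).
by apply: big1 => i _; case: (mu_valid i) => _ ->.
Qed.

Lemma jprob_deviate mu i (mi : ipol R S (A i)) s (a : jact A) :
  jprob (deviate mu mi) s a = mi s (a i) * \prod_(j < N | j != i) mu j s (a j).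
Proof.
rewrite /jprob (bigD1 i) //= /deviate dfwith_in; congr (_ * _).
by apply: eq_bigr => j ji; rewrite dfwith_out // eq_sym.
Qed.

Lemma sum_jprob_deviate mu i (mi : ipol R S (A i)) s (F : jact A -> R) :
  \sum_(a : jact A) jprob (deviate mu mi) s a * F a =
  \sum_(ai : A i) mi s ai *
     \sum_(a : jact A | a i == ai) (\prod_(j < N | j != i) mu j s (a j)) * F a.
Proof.
rewrite (partition_big (fun a : jact A => a i) predT) //=.
apply: eq_bigr => ai _; rewrite big_distrr /=; apply: eq_bigr => a /eqP <-.
by rewrite jprob_deviate mulrA.
Qed.

Lemma deviate_id mu i : deviate mu (mu i) = mu.
Proof. by apply: functional_extensionality_dep => j; rewrite /deviate; case: dfwithP. Qed.

Lemma deviate_valid mu i (mi : ipol R S (A i)) :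
  jpol_valid mu -> ipol_valid mi -> jpol_valid (deviate mu mi).
Proof. by move=> mu_valid mi_valid j; rewrite /deviate; case: dfwithP. Qed.

Lemma sum_dpol d i s (G : A i -> R) : \sum_(ai : A i) djp d i s ai * G ai = G (d i s).
Proof.
rewrite (bigD1 (d i s)) //= /dpol_to_jpol eqxx mul1r big1 ?addr0 //.
by move=> ai /negbTE ->; rewrite mul0r.
Qed.

Lemma dpol_valid d : jpol_valid (djp d).
Proof.
move=> i; split => [s a|s]; first by rewrite /dpol_to_jpol; case: eqP.
rewrite -[RHS](sum_dpol d s (fun _ : A i => 1)).
by apply: eq_bigr => a _; rewrite mulr1.
Qed.

Lemma Pmu_ge0 (P : kernel R S A) mu : kernel_valid P -> jpol_valid mu ->
  forall s s', 0 <= Pmu P mu s s'.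
Proof.
move=> [P_ge0 _] mu_valid s s'; apply: sumr_ge0 => a _.
by rewrite mulr_ge0 ?jprob_ge0.
Qed.

Lemma Pmu_sum1 (P : kernel R S A) mu : kernel_valid P -> jpol_valid mu ->
  forall s, \sum_s' Pmu P mu s s' = 1.
Proof.
move=> [_ P_sum1] mu_valid s; rewrite /Pmu exchange_big /=.
by under eq_bigr do rewrite -big_distrr /= P_sum1 mulr1; rewrite jprob_sum1.
Qed.

Definition dpol_code d : {dffun forall i, {ffun S -> A i}} :=
  finfun (fun i => [ffun s => d i s]).

Lemma dpol_code_inj : injective dpol_code.
Proof.
move=> d1 d2 /ffunP code_eq; apply: functional_extensionality_dep => i.
by apply: funext => s; move/ffunP: (code_eq i) => /(_ s); rewrite !ffunE.
Qed.

Section IntermediatePolicies.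
Variables (sigma : {perm 'I_N}) (d d' : dpol S A).

Lemma hatpol0 : hatpol sigma d d' 0 = d.
Proof. by apply: functional_extensionality_dep => j; rewrite /hatpol ltn0. Qed.

Lemma hatpolN : hatpol sigma d d' N = d'.
Proof. by apply: functional_extensionality_dep => j; rewrite /hatpol ltn_ord. Qed.

Lemma hatpol_current (h : 'I_N) : @hatpol _ _ _ sigma d d' h (sigma h) = d (sigma h).
Proof. by rewrite /hatpol permK ltnn. Qed.

Lemma hatpolS (h : 'I_N) :
  djp (hatpol sigma d d' h.+1) = deviate (djp (hatpol sigma d d' h)) (djp d' (sigma h)).
Proof.
apply: functional_extensionality_dep => j; rewrite /deviate.
case: dfwithP => [|k k_neq]; first by rewrite /dpol_to_jpol /hatpol permK ltnSn.
have hk : nat_of_ord ((sigma^-1)%g k) != h.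
  by apply: contra_neq k_neq => /val_inj <-; rewrite permKV.
by rewrite /dpol_to_jpol /hatpol ltnS leq_eqVlt (negbTE hk).
Qed.

End IntermediatePolicies.

Lemma hatpol_id (sigma : {perm 'I_N}) d h : hatpol sigma d d h = d.
Proof. by apply: functional_extensionality_dep => j; rewrite /hatpol if_same. Qed.

End Policies.

Section MeanVarianceGame.
Variables (R : realType) (N : nat) (S : finType) (A : 'I_N -> finType)
  (P : kernel R S A) (r : S -> jact A -> R) (beta : R).
Implicit Types (mu : jpol R S A) (d : dpol S A).
Local Notation J := (Jmv P r beta).
Local Notation V := (Vf P r beta).
Local Notation adv := (expAdv P r beta).
Local Notation djp d := (dpol_to_jpol R d : jpol R S A).

Lemma Jmv_statdist_fs mu : J mu = \sum_s statdist P mu s * fs P r beta mu s.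
Proof.
rewrite /Jmv /zeta /fs /fsa {1}/etamu mulr_sumr -sumrB.
apply: eq_bigr => s _; rewrite mulrCA -mulrBr mulr_sumr -sumrB; congr (_ * _).
by apply: eq_bigr => a _; rewrite mulrCA -mulrBr.
Qed.

Lemma Jmv_void mu : #|S| = 0 -> J mu = 0.
Proof. by move=> S0; rewrite Jmv_statdist_fs big_pred0 //; apply: card0_eq. Qed.

Lemma sum_jprob_Af mu mu' s : jpol_valid mu' ->
  \sum_a jprob mu' s a * Af P r beta mu s a =
  \sum_a jprob mu' s a * fsa P r beta mu s a - J mu
  + \sum_s' Pmu P mu' s s' * V mu s' - V mu s.
Proof.
move=> mu'_valid; rewrite /Af /Qf; move: (fsa P r beta mu) => f.
have expected_V : \sum_a jprob mu' s a * \sum_s' P s a s' * V mu s' =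
                  \sum_s' Pmu P mu' s s' * V mu s'.
  under eq_bigr do rewrite big_distrr /=.
  rewrite exchange_big /=; apply: eq_bigr => s' _.
  by rewrite /Pmu big_distrl /=; apply: eq_bigr => a _; rewrite mulrA.
under eq_bigr do rewrite mulrBr !mulrDr mulrN.
by rewrite !big_split /= !sumrN expected_V -!big_distrl /= jprob_sum1 // !mul1r.
Qed.

Variable s0 : S.
Hypothesis P_valid : kernel_valid P.
Hypothesis Pmu_ergodic : forall mu, jpol_valid mu -> ergodic (Pmu P mu).
Hypothesis etamu_const : forall mu mu', jpol_valid mu -> jpol_valid mu' ->
  etamu P r mu = etamu P r mu'.

Lemma statdist_stationary mu : jpol_valid mu -> stationary (Pmu P mu) (statdist P mu).
Proof.
move=> mu_valid; apply: xgetPex.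
exact: (stationary_exists (Pmu_ge0 P_valid mu_valid) (Pmu_sum1 P_valid mu_valid) s0).
Qed.

Lemma statdist_gt0 mu s : jpol_valid mu -> 0 < statdist P mu s.
Proof.
by move=> mu_valid; apply: stationary_gt0 (statdist_stationary mu_valid) s; apply: Pmu_ergodic.
Qed.

Lemma Vf_poisson mu : jpol_valid mu -> poisson_sol P r beta mu (V mu).
Proof.
move=> mu_valid; apply: xgetPex.
have [_ [pi_sum1 _]] := statdist_stationary mu_valid.
have centered : \sum_s statdist P mu s * (fs P r beta mu s - J mu) = 0.
  under eq_bigr do rewrite mulrBr.
  by rewrite sumrB -big_distrl /= -Jmv_statdist_fs pi_sum1 mul1r subrr.
have [W W_sol] := poisson_exists (Pmu_ergodic mu_valid) (statdist_stationary mu_valid) centered.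
by exists W => s; rewrite /= W_sol.
Qed.

Lemma sum_jprob_Af_self mu s : jpol_valid mu ->
  \sum_a jprob mu s a * Af P r beta mu s a = 0.
Proof.
move=> mu_valid; rewrite sum_jprob_Af //; apply/eqP; rewrite subr_eq0; apply/eqP.
by rewrite [RHS](Vf_poisson mu_valid s).
Qed.

Lemma performance_difference mu mu' : jpol_valid mu -> jpol_valid mu' ->
  J mu' - J mu = \sum_s statdist P mu' s * \sum_a jprob mu' s a * Af P r beta mu s a.
Proof.
move=> mu_valid mu'_valid.
have f_eq : fsa P r beta mu = fsa P r beta mu' by rewrite /fsa (etamu_const mu_valid mu'_valid).
under eq_bigr do rewrite sum_jprob_Af // f_eq -/(fs P r beta mu' _).
have [_ [pi_sum1 pi_inv]] := statdist_stationary mu'_valid.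
have expected_V : \sum_s statdist P mu' s * \sum_s' Pmu P mu' s s' * V mu s' =
                  \sum_s statdist P mu' s * V mu s.
  under eq_bigr do rewrite big_distrr /=.
  rewrite exchange_big /=; apply: eq_bigr => s' _.
  by rewrite -pi_inv big_distrl /=; apply: eq_bigr => s _; rewrite mulrA.
under eq_bigr do rewrite mulrBr !mulrDr mulrN.
by rewrite !big_split /= !sumrN expected_V -!big_distrl /= pi_sum1 mul1r -Jmv_statdist_fs addrK.
Qed.

Lemma Jmv_deviate_sub mu i (mi : ipol R S (A i)) : jpol_valid mu -> ipol_valid mi ->
  J (deviate mu mi) - J mu =
  \sum_s statdist P (deviate mu mi) s * \sum_(ai : A i) mi s ai * adv mu s ai.
Proof.
move=> mu_valid mi_valid.
rewrite performance_difference //; last exact: deviate_valid.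
by apply: eq_bigr => s _; rewrite sum_jprob_deviate.
Qed.

Lemma expAdv_dpol_self d i s : adv (djp d) s (d i s) = 0.
Proof.
have := sum_jprob_Af_self s (dpol_valid R d).
by rewrite -{1}(deviate_id (djp d) i) sum_jprob_deviate sum_dpol.
Qed.

Lemma nash_dpol d :
  (forall i s (ai : A i), adv (djp d) s ai <= adv (djp d) s (d i s)) ->
  nash P r beta (djp d).
Proof.
move=> greedy i mi mi_valid; have d_valid := dpol_valid R d.
have dev_valid := deviate_valid d_valid mi_valid.
rewrite -subr_le0 Jmv_deviate_sub //; apply: sumr_le0 => s _.
apply: mulr_ge0_le0; first exact/ltW/statdist_gt0.
apply: sumr_le0 => ai _; apply: mulr_ge0_le0; first by case: mi_valid.
by rewrite -(expAdv_dpol_self d i s) greedy.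
Qed.

Lemma mapi_fixpoint_nash sigma d : mapi_step P r beta sigma d d -> nash P r beta (djp d).
Proof.
move=> step; apply: nash_dpol => i; rewrite -[i](permKV sigma) => s ai.
have [greedy _] := step ((sigma^-1)%g i) s.
by move: (greedy ai); rewrite /= hatpol_id.
Qed.

#[local] Hint Resolve dpol_valid : core.

Section MapiStep.
Variables (sigma : {perm 'I_N}) (d d' : dpol S A).
Hypothesis step : mapi_step P r beta sigma d d'.
Local Notation hat h := (djp (hatpol sigma d d' h)).

Lemma Jmv_hatpolS_sub (h : 'I_N) :
  J (hat h.+1) - J (hat h) = \sum_s statdist P (hat h.+1) s * adv (hat h) s (d' (sigma h) s).
Proof.
rewrite hatpolS Jmv_deviate_sub //; last exact: dpol_valid.
by apply: eq_bigr => s _; rewrite sum_dpol.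
Qed.

Lemma expAdv_hatpol_current (h : 'I_N) s : adv (hat h) s (d (sigma h) s) = 0.
Proof. by rewrite -(@hatpol_current _ _ _ sigma d d' h) expAdv_dpol_self. Qed.

Lemma mapi_adv_ge0 (h : 'I_N) s : 0 <= adv (hat h) s (d' (sigma h) s).
Proof. by have [greedy _] := step h s; rewrite -(expAdv_hatpol_current h s) greedy. Qed.

Lemma mapi_adv_gt0 (h : 'I_N) s :
  d' (sigma h) s != d (sigma h) s -> 0 < adv (hat h) s (d' (sigma h) s).
Proof.
move=> changed; have [greedy keep_old] := step h s.
rewrite -(expAdv_hatpol_current h s).
have [ai ai_better] : exists ai : A (sigma h), adv (hat h) s (d (sigma h) s) < adv (hat h) s ai.
  apply: contrapT => no_better; move/eqP: changed; apply; apply: keep_old => ai.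
  by rewrite leNgt; apply/negP => ai_better; apply: no_better; exists ai.
exact: lt_le_trans ai_better (greedy ai).
Qed.

Lemma Jmv_mapi_step_lt i s : d' i s != d i s -> J (djp d) < J (djp d').
Proof.
move=> changed; rewrite -subr_gt0.
have telescope : \sum_(h < N) (J (hat h.+1) - J (hat h)) = J (djp d') - J (djp d).
  by have := telescope_sumr (fun h => J (hat h)) (leq0n N); rewrite big_mkord hatpolN hatpol0.
have term_ge0 (h : 'I_N) t :
    0 <= statdist P (hat h.+1) t * adv (hat h) t (d' (sigma h) t).
  by rewrite mulr_ge0 ?mapi_adv_ge0 // ltW // statdist_gt0.
rewrite -telescope; apply: (psumr_gt0 (j := (sigma^-1)%g i)) => [h|].
  by rewrite Jmv_hatpolS_sub sumr_ge0.
rewrite Jmv_hatpolS_sub; apply: (psumr_gt0 (j := s)) => //.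
by rewrite mulr_gt0 ?statdist_gt0 // mapi_adv_gt0 ?permKV.
Qed.

End MapiStep.

Lemma mapi_terminates (dk : nat -> dpol S A) (sigma : nat -> {perm 'I_N}) :
  (forall k, mapi_step P r beta (sigma k) (dk k) (dk k.+1)) ->
  exists K, forall i s, dk K.+1 i s = dk K i s.
Proof.
move=> steps; apply: contrapT => never_fixed.
have J_incr k : J (djp (dk k)) < J (djp (dk k.+1)).
  have [i [s changed]] : exists i s, dk k.+1 i s != dk k i s.
    apply: contrapT => unchanged; apply: never_fixed; exists k => i s.
    by apply/eqP/negPn/negP => changed; apply: unchanged; exists i, s.
  exact: Jmv_mapi_step_lt (steps k) _ _ changed.
apply: (@nat_fun_not_inj _ (fun k => dpol_code (dk k))) => k1 k2 /dpol_code_inj dk_eq.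
by apply: (incr_inj J_incr); rewrite /= dk_eq.
Qed.

End MeanVarianceGame.

Unset Implicit Arguments. Set Strict Implicit.

Theorem corollary2 (R : realType) (N : nat) (S : finType) (A : 'I_N -> finType)
  (P : kernel R S A) (r : S -> jact A -> R) (beta : R) :
  kernel_valid P ->
  0 <= beta ->
  (forall mu : jpol R S A, jpol_valid mu -> ergodic (Pmu P mu)) ->
  (forall mu mu' : jpol R S A, jpol_valid mu -> jpol_valid mu' ->
     etamu P r mu = etamu P r mu') ->
  forall (d : nat -> dpol S A) (sigma : nat -> {perm 'I_N}),
    (forall k, mapi_step P r beta (sigma k) (d k) (d k.+1)) ->
    exists K : nat,
      (forall i s, d K.+1 i s = d K i s) /\
      nash P r beta (dpol_to_jpol R (d K)).
Proof.
move=> P_valid _ Pmu_ergodic etamu_const d sigma steps.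
have [S0 | /card_gt0P[s0 _]] := posnP #|S|.
  exists 0%N; split=> [i s|i mi _]; first by have := card0_eq S0 s.
  by rewrite !Jmv_void.
have [K fixed] := mapi_terminates s0 P_valid Pmu_ergodic etamu_const steps.
have dK_eq : d K.+1 = d K.
  by apply: functional_extensionality_dep => i; apply: funext => s; apply: fixed.
exists K; split=> //.
apply: (mapi_fixpoint_nash s0 P_valid Pmu_ergodic etamu_const (sigma := sigma K)).
by move: (steps K); rewrite dK_eq.
Qed.
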